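(* Let $K_1\subset\mathbb{R}^n$, $K_2\subset\wedge^2\mathbb{R}^n,\ldots,K_n\subset\wedge^n\mathbb{R}^n$ be proper cones. Suppose that for every $j=2,\ldots,n$ there exists a basis $e_1'(j),\ldots,e_n'(j)$ of $\mathbb{R}^n$ such that $K_j\subseteq K_j'$, where $K_j'\subset\wedge^j\mathbb{R}^n$ is an exterior basic cone defined by this basis. Then for every $j=2,\ldots,n$ the set $T(K_1,\ldots,K_j)$, if it is nonempty, is a cone of rank $j$ in $\mathbb{R}^n$.
   Context: A proper cone is a closed convex cone that is pointed and solid. $\wedge^j\mathbb{R}^n$ is the $j$th exterior power of $\mathbb{R}^n$. An exterior basic cone defined by a basis $e_1',\ldots,e_n'$ is a cone in $\wedge^j\mathbb{R}^n$ spanned (as nonnegative combinations) by vectors $\sigma_{i_1\ldots i_j}(e'_{i_1}\wedge\cdots\wedge e'_{i_j})$, $1\le i_1<\cdots<i_j\le n$, with each fixed sign $\sigma_{i_1\ldots i_j}\in\{\pm1\}$. Define recursively $T(K_1)=K_1\cup(-K_1)$, and for $j\ge2$, $T(K_1,\ldots,K_j)$ is the closure of the set of all $x_1\in\mathbb{R}^n$ for which there exist $x_2\in T(K_1)$, $x_3\in T(K_1,K_2),\ldots,x_j\in T(K_1,\ldots,K_{j-1})$ with $x_1\wedge\cdots\wedge x_j\in\operatorname{int}(K_j)\cup\operatorname{int}(-K_j)$. A closed set $T\subset\mathbb{R}^n$ is a cone of rank $k$ if $\alpha x\in T$ for all $x\in T,\alpha\in\mathbb{R}$, and $T$ contains at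 least one $k$-dimensional subspace and no subspace of higher dimension. *)

From HB Require Import structures.
From mathcomp Require Import all_boot all_order all_algebra.
From mathcomp Require Import all_classical all_reals all_analysis.
Import numFieldNormedType.Exports.
Set Implicit Arguments. Unset Strict Implicit. Unset Printing Implicit Defensive.
Import Order.TTheory GRing.Theory Num.Theory.
Local Open Scope ring_scope.
Local Open Scope classical_set_scope.

Section Exterior.
Variable R : realType.

(* j-element subsets of {0,...,n-1}: index set of the standard basis
   e_{i_1} /\ ... /\ e_{i_j} (i_1 < ... < i_j) of the j-th exterior power. *)
Definition jset (n j : nat) := {S : {set 'I_n} | #|S| == j}.

(* The j-th exterior power of R^n, in coordinates w.r.t. the standard basis
   e_{i_1} /\ ... /\ e_{i_j}; coordinate k corresponds to the subset enum_val k. *)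
Definition ext (n j : nat) := 'rV[R]_#|{: jset n j}|.

(* the elements i_1 < ... < i_j of S, in increasing order *)
Definition idx n j (S : jset n j) : 'I_j -> 'I_n :=
  fun i => @enum_val _ (mem (val S)) (cast_ord (esym (eqP (valP S))) i).

(* x_1 /\ ... /\ x_j where x_1,...,x_j are the rows of X :
   its coordinate at {i_1<...<i_j} is the minor on columns i_1,...,i_j. *)
Definition wedge n j (X : 'M[R]_(j, n)) : ext n j :=
  \row_(k < #|{: jset n j}|) \det (colsub (@idx n j (enum_val k)) X).

Definition proper_cone m (K : set 'rV[R]_m) : Prop :=
  [/\ closed K,
      (forall x y, K x -> K y -> K (x + y)),
      (forall (a : R) x, 0 <= a -> K x -> K (a *: x)),
      (forall x, K x -> K (- x) -> x = 0)
    & exists x, interior K x].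

(* exterior basic cone defined by the basis given by the rows of E
   (E invertible) and the signs (-1)^(sg S) *)
Definition ext_basic_cone n j (E : 'M[R]_n) (sg : jset n j -> bool)
  : set (ext n j) :=
  [set v | exists c : jset n j -> R, (forall S, 0 <= c S) /\
     v = \sum_(S : jset n j)
           c S *: ((-1) ^+ sg S *: wedge (rowsub (@idx n j S) E))].

Definition int_pm n j (K : set (ext n j)) : set (ext n j) :=
  interior K `|` interior [set y | K (- y)].

Variables (n : nat) (K1 : set 'rV[R]_n) (K : forall j, set (ext n j)).

(* one step of the recursion: given prev k = T(K_1,...,K_k) for k <= m+1,
   build T(K_1,...,K_{m+2}) *)
Definition Tstep (prev : nat -> set 'rV[R]_n) (m : nat) : set 'rV[R]_n :=
  closure [set x1 : 'rV[R]_n | exists xs : 'I_m.+1 -> 'rV[R]_n,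
     (forall i : 'I_m.+1, prev i.+1 (xs i)) /\
     int_pm (@K m.+2) (wedge (col_mx x1 (\matrix_(i < m.+1) xs i)))].

(* Tupto m k = T(K_1,...,K_k) for 1 <= k <= m+1 *)
Fixpoint Tupto (m : nat) : nat -> set 'rV[R]_n :=
  match m with
  | 0 => fun _ => K1 `|` [set x | K1 (- x)]
  | m'.+1 => fun k => if (k <= m'.+1)%N then Tupto m' k
                      else Tstep (Tupto m') m'
  end.

Definition Tcone (j : nat) : set 'rV[R]_n := Tupto j.-1 j.

End Exterior.

Definition subspace_in (R : realType) n (U : 'M[R]_n) (T : set 'rV[R]_n) :=
  forall v : 'rV[R]_n, (v <= U)%MS -> T v.

Definition cone_of_rank (R : realType) n (T : set 'rV[R]_n) (k : nat) : Prop :=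
  [/\ closed T,
      (forall x (a : R), T x -> T (a *: x)),
      (exists U : 'M[R]_n, \rank U = k /\ subspace_in U T)
    & (forall U : 'M[R]_n, subspace_in U T -> (\rank U <= k)%N)].

From HB Require Import structures.
From mathcomp Require Import all_boot all_order all_algebra all_fingroup.
From mathcomp Require Import lra ring.
From mathcomp Require Import all_classical all_reals all_analysis.
Import numFieldNormedType.Exports.
Import Order.TTheory GRing.Theory Num.Theory.
Local Open Scope ring_scope.
Local Open Scope classical_set_scope.
Set Implicit Arguments. Unset Strict Implicit. Unset Printing Implicit Defensive.

(* Write [Y] for the matrix of [x_1, ..., x_j] in the coordinates dual to the
   basis [e'(j)]. By Cauchy-Binet the coordinates of [x_1 /\ ... /\ x_j] in the
   exterior basic basis are the maximal minors of [Y]; since [K_j] lies in the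
   exterior basic cone, a wedge in [int(K_j) \cup int(-K_j)] has all of them
   nonzero with the fixed signs [sigma_S] up to a global sign. Replacing [x_1]
   by a combination of [x_1, ..., x_j] only rescales the wedge, so [T] is a
   closed cone containing the [j]-dimensional span of [x_1, ..., x_j]. A
   [(j+1)]-dimensional subspace of [T] would contain points of the generating
   set whose first row of [Y] has prescribed signs on [j+1] columns; these
   make all terms of the Laplace expansion of a [(j+1)]-square determinant with
   a repeated row positive, which is absurd. *)

Section IndexSets.
Variables n j : nat.

Lemma idx_inj (S : jset n j) : injective (idx S).
Proof. by move=> a b /enum_val_inj /cast_ord_inj. Qed.

Lemma mem_idx (S : jset n j) i : idx S i \in val S.
Proof. exact: enum_valP. Qed.

Lemma idx_surj (S : jset n j) x : x \in val S -> exists i, idx S i = x.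
Proof.
move=> xS; exists (cast_ord (eqP (valP S)) (enum_rank_in xS x)).
by rewrite /idx cast_ordK enum_rankK_in.
Qed.

Lemma jset_subset_eq (S S' : jset n j) : val S \subset val S' -> S = S'.
Proof.
move=> sub; apply: val_inj; apply/eqP.
by rewrite eqEcard sub (eqP (valP S)) (eqP (valP S')) leqnn.
Qed.

Lemma injective_idx_perm (g : 'I_j -> 'I_n) : injective g ->
  exists (S : jset n j) (s : 'S_j), forall i, g i = idx S (s i).
Proof.
move=> gi.
have cS : #|[set g i | i in 'I_j]%SET| == j by rewrite card_imset // card_ord.
pose S : jset n j := exist (fun A : {set 'I_n} => #|A| == j) _ cS.
have /boolp.choice[k Hk] i : exists k, idx S k = g i.
  by apply: idx_surj; rewrite /= imset_f.
have ki : injective k by move=> a b e; apply: gi; rewrite -!Hk e.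
by exists S, (perm ki) => i; rewrite permE Hk.
Qed.

End IndexSets.

Section Determinants.
Variable R : comPzRingType.

Lemma det_mulmx_sum_ffun j n (A : 'M[R]_(j, n)) (B : 'M[R]_(n, j)) :
  \det (A *m B) = \sum_(f : {ffun 'I_j -> 'I_n})
      (\prod_(i < j) A i (f i)) * \det (rowsub f B).
Proof.
transitivity (\sum_(s : 'S_j) \sum_(f : {ffun 'I_j -> 'I_n})
   (-1) ^+ s * ((\prod_(i < j) A i (f i)) * \prod_(i < j) B (f i) (s i))).
  apply: eq_bigr => s _; rewrite -big_distrr /=; congr (_ * _).
  under eq_bigr do rewrite mxE.
  rewrite bigA_distr_bigA /=; apply: eq_bigr => f _.
  by rewrite -big_split.
rewrite exchange_big /=; apply: eq_bigr => f _.
rewrite /determinant big_distrr /=; apply: eq_bigr => s _.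
rewrite mulrCA; congr (_ * (_ * _)); apply: eq_bigr => i _.
by rewrite mxE.
Qed.

Lemma det_colsub_perm j n (Y : 'M[R]_(j, n)) (g : 'I_j -> 'I_n) (S : jset n j)
    (s : 'S_j) :
  (forall i, g i = idx S (s i)) ->
  \det (colsub g Y) = (-1) ^+ s * \det (colsub (idx S) Y).
Proof.
move=> Hg.
have -> : colsub g Y = colsub s (colsub (idx S) Y).
  by rewrite -colsub_comp; apply/matrixP => a b; rewrite !mxE /= Hg.
by rewrite -col_permEsub col_permE det_mulmx det_perm odd_permV mulrC.
Qed.

(* Injective index maps are the pairs (S, s); the non-injective ones give
   matrices with a repeated row. *)
Lemma cauchy_binet j n (A : 'M[R]_(j, n)) (B : 'M[R]_(n, j)) :
  \det (A *m B) =
  \sum_(S : jset n j) \det (colsub (idx S) A) * \det (rowsub (idx S) B).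
Proof.
rewrite det_mulmx_sum_ffun (bigID (fun f : {ffun 'I_j -> 'I_n} => injectiveb f)) /=.
rewrite [X in _ + X]big1 ?addr0; last first.
  move=> f /injectivePn [i1 [i2 Di12 Ef12]].
  by rewrite (determinant_alternate Di12) ?mulr0 // => k; rewrite !mxE Ef12.
pose h (p : (jset n j * 'S_j)%type) : {ffun 'I_j -> 'I_n} :=
  [ffun i => idx p.1 (p.2 i)].
have hinj : injective h.
  move=> [S s] [S' s'] /ffunP /= E.
  have ES : S = S'.
    apply: jset_subset_eq; apply/fintype.subsetP => x /idx_surj [k <-].
    by have := E (s^-1 k)%g; rewrite !ffunE /= permKV => ->; exact: mem_idx.
  subst S'; congr (_, _); apply/permP => i.
  by have := E i; rewrite !ffunE /= => /idx_inj.
rewrite (eq_bigl (mem [set h p | p in setT]%SET)); last first.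
  move=> f; apply/idP/idP.
    move=> /injectiveP /injective_idx_perm [S [s Hs]].
    by apply/imsetP; exists (S, s); rewrite ?inE //; apply/ffunP => i; rewrite ffunE.
  move=> /imsetP [[S s] _ ->]; apply/injectiveP => a b.
  by rewrite !ffunE /= => /idx_inj /perm_inj.
rewrite big_imset /=; last by move=> p q _ _; apply: hinj.
rewrite (eq_bigl xpredT); last by move=> p; exact: in_setT.
rewrite -(pair_big xpredT xpredT (fun S s =>
  (\prod_(i < j) A i (h (S, s) i)) * \det (rowsub (h (S, s)) B))) /=.
apply: eq_bigr => S _.
have Er (s : 'S_j) : rowsub (h (S, s)) B = perm_mx s *m rowsub (idx S) B.
  rewrite -row_permE row_permEsub -rowsub_comp.
  by apply/matrixP => a b; rewrite !mxE ffunE.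
under eq_bigr do rewrite Er det_mulmx det_perm.
rewrite /(determinant (colsub _ _)) big_distrl /=; apply: eq_bigr => s _.
rewrite mulrA [_ * (-1) ^+ _]mulrC; congr (_ * _ * _).
by apply: eq_bigr => i _; rewrite ffunE mxE.
Qed.

(* Laplace expansion, along its first row, of the square matrix formed by the
   columns g of Y with the first row of Y repeated on top. *)
Lemma laplace_repeated_row j n (Y : 'M[R]_(j.+1, n)) (g : 'I_j.+2 -> 'I_n) :
  \sum_(k < j.+2) Y 0 (g k) * ((-1) ^+ k * \det (colsub (g \o lift k) Y)) = 0.
Proof.
pose Z := \matrix_(i < j.+2, k < j.+2) Y (inord i.-1) (g k).
have Z0 : \det Z = 0 by apply: (@determinant_alternate _ _ _ 0 1) => // k; rewrite !mxE.
rewrite -[RHS]Z0 (expand_det_row Z 0); apply: eq_bigr => k _.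
rewrite /cofactor !mxE add0n.
have -> : (inord (@nat_of_ord j.+2 0).-1 : 'I_j.+1) = 0 by apply/val_inj; rewrite /= inordK.
congr (_ * (_ * \det _)); apply/matrixP => a b; rewrite !mxE.
by have -> : (inord (lift (0 : 'I_j.+2) a).-1 : 'I_j.+1) = a
  by apply/val_inj; rewrite lift0 /= inordK.
Qed.

End Determinants.

Section Topology.
Variable R : realType.

Lemma nbhs_ray (V : normedModType R) (C : set V) (v w : V) : nbhs v C ->
  exists2 t : R, 0 < t & C (v + t *: w).
Proof.
move=> Cv.
have /nbhs_ballP [e /= e0 He] : \forall t \near (0 : R), C (v + t *: w).
  have : v + t *: w @[t --> (0 : R)] --> v + 0 *: w.
    by apply: cvgD; [exact: cvg_cst | exact: cvgZr_tmp cvg_id].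
  by rewrite scale0r addr0; apply.
exists (e / 2); first by rewrite divr_gt0.
apply: He; rewrite -ball_normE /= sub0r normrN ger0_norm ?divr_ge0 ?ltW //.
by rewrite ltr_pdivrMr // ltr_pMr // ltr1n.
Qed.

Lemma nbhs_scale (V : normedModType R) (S : set V) (c : R) (v : V) :
  c != 0 -> nbhs v S -> nbhs (c *: v) [set y | S (c^-1 *: y)].
Proof.
move=> c0; have : c^-1 *: y @[y --> c *: v] --> c^-1 *: (c *: v).
  exact: cvgZ (cvg_cst _) cvg_id.
by rewrite scalerA mulVf // scale1r; apply.
Qed.

Lemma mulmx_coord_continuous n p (M : 'M[R]_(n, p)) (c : 'I_p) :
  continuous (fun y : 'rV[R]_n => (y *m M) 0 c).
Proof.
have -> : (fun y : 'rV[R]_n => (y *m M) 0 c) =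
    \sum_i (fun y : 'rV[R]_n => y 0 i * M i c).
  by apply/funext => y; rewrite fct_sumE mxE.
apply: (big_ind (fun f : 'rV[R]_n -> R => continuous f)).
- exact: cst_continuous.
- by move=> f g cf cg y; exact: cvgD (cf y) (cg y).
- by move=> i _ y; apply: (@cvgMr_tmp _ _ (nbhs y)); exact: coord_continuous.
Qed.

End Topology.

Section BasisCoordinates.
Variables (R : realType) (n j : nat) (E : 'M[R]_n).

Lemma wedge_mulmx (M : 'M[R]_j) (X : 'M[R]_(j, n)) :
  wedge (M *m X) = \det M *: wedge X.
Proof. by apply/rowP => k; rewrite !mxE -mulmx_colsub det_mulmx. Qed.

(* The coordinate of [u] along [wedge (rowsub (idx S) E)] in the basis of
   the exterior power induced by the rows of [E]. *)
Definition basis_coord (S : jset n j) (u : ext R n j) : R :=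
  (u *m \col_k \det (rowsub (idx (enum_val k)) (colsub (idx S) (invmx E)))) 0 0.

Lemma basis_coordD S u v : basis_coord S (u + v) = basis_coord S u + basis_coord S v.
Proof. by rewrite /basis_coord mulmxDl mxE. Qed.

Lemma basis_coordZ S a u : basis_coord S (a *: u) = a * basis_coord S u.
Proof. by rewrite /basis_coord -scalemxAl mxE. Qed.

Lemma basis_coordN S u : basis_coord S (- u) = - basis_coord S u.
Proof. by rewrite /basis_coord mulNmx mxE. Qed.

Lemma basis_coord_sum S (I : finType) (f : I -> ext R n j) :
  basis_coord S (\sum_i f i) = \sum_i basis_coord S (f i).
Proof. by rewrite /basis_coord mulmx_suml summxE. Qed.

Lemma basis_coord_wedge S (X : 'M[R]_(j, n)) :
  basis_coord S (wedge X) = \det (colsub (idx S) (X *m invmx E)).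
Proof.
rewrite -mulmx_colsub cauchy_binet /basis_coord mxE.
rewrite (big_enum_val (A := {: jset n j})) /=.
by apply: eq_bigr => k _; rewrite !mxE.
Qed.

Hypothesis E_unit : E \in unitmx.

Lemma basis_coord_basis S S' :
  basis_coord S' (wedge (rowsub (idx S) E)) = (S == S')%:R.
Proof.
rewrite basis_coord_wedge mul_rowsub_mx mulmxV //.
have -> : colsub (idx S') (rowsub (idx S) 1%:M) =
          \matrix_(a, b) (idx S a == idx S' b)%:R :> 'M[R]_j.
  by apply/matrixP => a b; rewrite !mxE.
have [<-|neq] := eqVneq S S'.
  rewrite (_ : \matrix_(a, b) _ = 1%:M) ?det1 //.
  by apply/matrixP => a b; rewrite !mxE (inj_eq (@idx_inj _ _ S)).
have [a Ha] : exists a, idx S a \notin val S'.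
  apply/existsP; apply: contraR neq; rewrite negb_exists => /forallP idxS'.
  apply/eqP/jset_subset_eq; apply/fintype.subsetP => x /idx_surj [i <-].
  by have := idxS' i; rewrite negbK.
rewrite (expand_det_row _ a) big1 // => b _; rewrite !mxE.
by case: eqP => [idxSa|]; [move: Ha; rewrite idxSa mem_idx | rewrite mul0r].
Qed.

Variable sg : jset n j -> bool.

Lemma basic_cone_coord_ge0 S u :
  ext_basic_cone E sg u -> 0 <= (-1) ^+ sg S * basis_coord S u.
Proof.
move=> [c [c0 ->]]; rewrite basis_coord_sum.
under eq_bigr do rewrite !basis_coordZ basis_coord_basis.
rewrite (bigD1 S) //= big1 ?addr0; last first.
  by move=> S' /negbTE nS; rewrite nS !mulr0.
by rewrite eqxx mulr1 mulrCA -expr2 sqrr_sign mulr1 c0.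
Qed.

Definition signed_minors (Y : 'M[R]_(j, n)) : Prop :=
  exists b : bool, forall S,
    0 < (-1) ^+ b * ((-1) ^+ sg S * \det (colsub (idx S) Y)).

(* If [v] is interior to the basic cone, so is [v - t w_S] for small [t > 0]
   (with [w_S] the basis vector [wedge (rowsub (idx S) E)]),
   whence the signed [S]-coordinate of [v] is at least [t]. *)
Lemma int_pm_signed_minors (K : set (ext R n j)) (X : 'M[R]_(j, n)) :
  K `<=` ext_basic_cone E sg -> int_pm K (wedge X) ->
  signed_minors (X *m invmx E).
Proof.
move=> HK; set v := wedge X.
have coord_basis S : (-1) ^+ sg S *
    basis_coord S ((-1) ^+ sg S *: wedge (rowsub (idx S) E)) = 1.
  by rewrite basis_coordZ basis_coord_basis eqxx mulr1 -expr2 sqrr_sign.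
case=> [Kv|Kmv].
  exists false => S; rewrite expr0 mul1r -basis_coord_wedge.
  have Cv : nbhs v (ext_basic_cone E sg) by apply: (interiorS HK).
  have [t t0] := nbhs_ray (- ((-1) ^+ sg S *: wedge (rowsub (idx S) E))) Cv.
  move/(basic_cone_coord_ge0 S).
  rewrite basis_coordD (basis_coordZ S t) basis_coordN mulrN mulrDr mulrN.
  rewrite mulrCA coord_basis mulr1; lra.
exists true => S; rewrite expr1 mulN1r oppr_gt0 -basis_coord_wedge.
have Cv : nbhs v [set y | ext_basic_cone E sg (- y)].
  by apply: (interiorS _ Kmv) => y /= /HK.
have [t t0] := nbhs_ray ((-1) ^+ sg S *: wedge (rowsub (idx S) E)) Cv.
move/(basic_cone_coord_ge0 S).
rewrite basis_coordN basis_coordD (basis_coordZ S t) mulrN mulrDr mulrCA.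
rewrite coord_basis mulr1; lra.
Qed.

End BasisCoordinates.

Section RankBound.
Variable R : realType.

Lemma signed_minors_rank j n (sg : jset n j -> bool) (Y : 'M[R]_(j, n)) :
  (j <= n)%N -> signed_minors sg Y -> \rank Y = j.
Proof.
move=> jn [b Hb].
have cS : #|[set widen_ord jn i | i in 'I_j]%SET| == j.
  by rewrite card_imset ?card_ord // => a c /(congr1 val) /= /val_inj.
pose S : jset n j := exist (fun A : {set 'I_n} => #|A| == j) _ cS.
have detS : \det (colsub (idx S) Y) != 0.
  by apply/eqP => d0; have := Hb S; rewrite d0 !mulr0 ltxx.
apply/eqP; rewrite eqn_leq rank_leq_row /=.
have rS : \rank (colsub (idx S) Y) = j by rewrite mxrank_unit // unitmxE unitfE.
apply: leq_trans (mxrankM_maxl Y (colsub (idx S) 1%:M)).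
by rewrite mulmx_colsub mulmx1 rS.
Qed.

(* [tau k] is chosen so that, when [Y] has [signed_minors], the [k]-th term
   of [laplace_repeated_row] has the sign of [Y 0 (g k) * tau k] (up to the
   global sign); these terms cannot all be positive. *)
Lemma signed_minors_sign_obstruction j n (sg : jset n j.+1 -> bool)
    (g : 'I_j.+2 -> 'I_n) : injective g ->
  exists tau : 'I_j.+2 -> R, (forall k, tau k * tau k = 1) /\
    forall Y : 'M[R]_(j.+1, n), signed_minors sg Y ->
    exists k, Y 0 (g k) * tau k <= 0.
Proof.
move=> gi.
have /boolp.choice[p gp] k : exists p : jset n j.+1 * 'S_j.+1,
    forall i, (g \o lift k) i = idx p.1 (p.2 i).
  have [S [s Hs]] := injective_idx_perm (inj_comp gi (@lift_inj _ k)).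
  by exists (S, s).
pose tau (k : 'I_j.+2) : R := (-1) ^+ k * (-1) ^+ (p k).2 * (-1) ^+ sg (p k).1.
exists tau; split=> [k|Y [b Hb]].
  by rewrite -expr2 !exprMn !sqrr_sign !mulr1.
case: (boolP [exists k, Y 0 (g k) * tau k <= 0]) => [/existsP//|].
rewrite negb_exists => /forallP /= tau_pos; exfalso.
have term_pos k :
    0 < (-1) ^+ b * (Y 0 (g k) * ((-1) ^+ k * \det (colsub (g \o lift k) Y))).
  rewrite (det_colsub_perm Y (gp k)).
  have := Hb (p k).1; have := tau_pos k; rewrite -ltNge /tau.
  set y := Y 0 (g k); set D := \det _; set e := (-1) ^+ b.
  set s := (-1) ^+ k; set q := (-1) ^+ (p k).2; set r := (-1) ^+ sg (p k).1.
  move=> h1 h2; have rr : r * r = 1 by rewrite -expr2 sqrr_sign.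
  suff -> : e * (y * (s * (q * D))) = (y * (s * q * r)) * (e * (r * D)).
    exact: mulr_gt0.
  by rewrite -[LHS]mulr1 -rr; ring.
have := congr1 (fun s => (-1) ^+ b * s) (laplace_repeated_row Y g).
rewrite mulr0 big_distrr /= (bigD1 ord0) //=.
have := term_pos ord0.
have : 0 <= \sum_(k < j.+2 | k != ord0)
    (-1) ^+ b * (Y 0 (g k) * ((-1) ^+ k * \det (colsub (g \o lift k) Y))).
  by apply: sumr_ge0 => k _; apply: ltW.
lra.
Qed.

Lemma row_space_interpolation p n k (V : 'M[R]_(p, n)) : (k <= \rank V)%N ->
  exists g : 'I_k -> 'I_n, injective g /\
    forall t : 'I_k -> R, exists a : 'rV[R]_p, forall i, (a *m V) 0 (g i) = t i.
Proof.
move=> kV; have kVt : (k <= \rank V^T)%N by rewrite mxrank_tr.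
pose f := maxrankfun V^T.
exists (fun i => f (widen_ord kVt i)); split.
  by move=> a b /maxrankfun_inj /(congr1 val) /= /val_inj.
move=> t.
have fullV : row_full (colsub f V).
  by rewrite /row_full -mxrank_tr trmx_mxsub; exact: maxrowsub_free.
pose t' : 'rV[R]_(\rank V^T) :=
  \row_i (if insub (val i) is Some i' then t i' else 0).
have /submxP [a ta] : (t' <= colsub f V)%MS by apply: submx_full.
exists a => i; rewrite (_ : (a *m V) 0 _ = (a *m colsub f V) 0 (widen_ord kVt i)).
  by rewrite -ta mxE /= valK.
by rewrite mulmx_colsub [RHS]mxE.
Qed.

End RankBound.

Section Tbase.
Variables (R : realType) (n m : nat).
Variables (P : ('I_m.+1 -> 'rV[R]_n) -> Prop) (KK : set (ext R n m.+2)).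
Hypothesis KK_cone : forall (a : R) x, 0 <= a -> KK x -> KK (a *: x).

(* For [P xs] meaning [x_(i+2) \in T(K_1, ..., K_(i+1))] and [KK = K_j], the
   closure of [Tbase] is [T(K_1, ..., K_j)]; only the cone property of [KK]
   matters, so [P] stays abstract. *)
Definition Tbase : set 'rV[R]_n :=
  [set x1 : 'rV[R]_n | exists xs : 'I_m.+1 -> 'rV[R]_n, P xs /\
     int_pm KK (wedge (col_mx x1 (\matrix_(i < m.+1) xs i)))].

Lemma int_pmZ (c : R) v : c != 0 -> int_pm KK v -> int_pm KK (c *: v).
Proof.
move=> c0 Kv.
have cK (y : ext R n m.+2) : c *: (c^-1 *: y) = y by rewrite scalerA mulfV // scale1r.
have [cp|cn] := ltrP 0 c.
  case: Kv => Kv; [left|right]; apply: filterS (nbhs_scale c0 Kv) => y /= Ky.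
    by rewrite -(cK y); apply: KK_cone => //; exact: ltW.
  by rewrite -(cK y) -scalerN; apply: KK_cone => //; exact: ltW.
have cn' : 0 <= - c by rewrite oppr_ge0.
case: Kv => Kv; [right|left]; apply: filterS (nbhs_scale c0 Kv) => y /= Ky.
  by rewrite -{1}(cK y) -scaleNr; apply: KK_cone.
by rewrite -(cK y) -(opprK (c^-1 *: y)) scalerN -scaleNr; apply: KK_cone.
Qed.

Lemma row_mx_00 p (a : 'M[R]_1) : (row_mx a (0 : 'M[R]_(1, p))) 0 0 = a 0 0.
Proof. by rewrite (_ : (0 : 'I_(1 + p)) = lshift p 0) ?row_mxEl //; exact/val_inj. Qed.

Lemma mul_col_mx_row0 p q (x : 'rV[R]_n) (X : 'M[R]_(p, n)) (M : 'M[R]_(n, q)) i :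
  (col_mx x X *m M) 0 i = (x *m M) 0 i.
Proof.
rewrite mul_col_mx (_ : (0 : 'I_(1 + p)) = lshift p 0) ?col_mxEu //.
exact/val_inj.
Qed.

(* Replacing [x1] by a combination of [x1, x2, ..., xj] with nonzero
   [x1]-coefficient [a 0 0] multiplies the wedge by [a 0 0]. *)
Lemma Tbase_mul (x : 'rV[R]_n) xs (a : 'rV[R]_(1 + m.+1)) :
  P xs -> int_pm KK (wedge (col_mx x (\matrix_(i < m.+1) xs i))) ->
  a 0 0 != 0 -> Tbase (a *m col_mx x (\matrix_(i < m.+1) xs i)).
Proof.
move=> Pxs Kx a0; exists xs; split => //.
set XS := \matrix_(i < m.+1) xs i in Kx *.
have -> : col_mx (a *m col_mx x XS) XS =
    block_mx (lsubmx a) (rsubmx a) 0 1%:M *m col_mx x XS.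
  by rewrite block_mxEv mul_col_mx hsubmxK mul_row_col mul0mx mul1mx add0r.
rewrite wedge_mulmx det_ublock det1 mulr1 det_mx11.
have -> : lsubmx a 0 0 = a 0 0 by rewrite mxE; congr (a 0 _); exact/val_inj.
exact: int_pmZ.
Qed.

Lemma closure_Tbase_mul (x : 'rV[R]_n) xs (a : 'rV[R]_(1 + m.+1)) :
  P xs -> int_pm KK (wedge (col_mx x (\matrix_(i < m.+1) xs i))) ->
  closure Tbase (a *m col_mx x (\matrix_(i < m.+1) xs i)).
Proof.
move=> Pxs Kx.
have [a0|a0] := eqVneq (a 0 0) 0; last exact/subset_closure/Tbase_mul.
move=> B Bv; have [t t0 Bt] := nbhs_ray x Bv.
set XS := \matrix_(i < m.+1) xs i in Kx Bt *.
exists (a *m col_mx x XS + t *: x); split => //.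
have -> : a *m col_mx x XS + t *: x = (a + t *: row_mx 1 0) *m col_mx x XS.
  by rewrite mulmxDl -scalemxAl mul_row_col mul1mx mul0mx addr0.
apply: Tbase_mul => //.
by rewrite mxE [X in _ + X]mxE row_mx_00 a0 add0r mxE mulr1 gt_eqF.
Qed.

Lemma closure_TbaseZ z (c : R) :
  Tbase !=set0 -> closure Tbase z -> closure Tbase (c *: z).
Proof.
move=> [x0 [xs0 [Pxs0 Kx0]]] Tz.
have [->|c0] := eqVneq c 0.
  by rewrite scale0r; have := closure_Tbase_mul (a := 0) Pxs0 Kx0; rewrite mul0mx.
move=> B Bcz.
have := nbhs_scale (invr_neq0 c0) Bcz.
rewrite scalerA mulVf // scale1r invrK => /Tz [y [[xs [Pxs Kx]] By]].
exists (c *: y); split => //.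
have -> : c *: y = row_mx c%:M 0 *m col_mx y (\matrix_(i < m.+1) xs i).
  by rewrite mul_row_col mul0mx addr0 mul_scalar_mx.
by apply: Tbase_mul => //; rewrite row_mx_00 mxE eqxx mulr1n.
Qed.

Variables (E : 'M[R]_n) (sg : jset n m.+2 -> bool).
Hypotheses (E_unit : E \in unitmx) (KK_basic : KK `<=` ext_basic_cone E sg).

Lemma closure_Tbase_subspace x0 : (m.+2 <= n)%N -> Tbase x0 ->
  exists U : 'M[R]_n, \rank U = m.+2 /\ subspace_in U (closure Tbase).
Proof.
move=> mn [xs [Pxs Kx]].
set X := col_mx x0 (\matrix_(i < m.+1) xs i) in Kx.
have rX : \rank X = m.+2.
  apply/eqP; rewrite eqn_leq rank_leq_row /=.
  rewrite -(signed_minors_rank mn (int_pm_signed_minors E_unit KK_basic Kx)).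
  exact: mxrankM_maxl.
exists (pid_mx m.+2 *m X); split.
  by rewrite mxrankMfree ?rank_pid_mx // /row_free rX.
by move=> v /submxP [b ->]; rewrite mulmxA; exact: closure_Tbase_mul.
Qed.

Lemma rank_subspace_closure_Tbase U :
  subspace_in U (closure Tbase) -> (\rank U <= m.+2)%N.
Proof.
move=> UT; rewrite leqNgt; apply/negP => rU.
have rV : (m.+3 <= \rank (U *m invmx E))%N.
  by rewrite mxrankMfree // row_free_unit unitmx_inv.
have [g [gi interp]] := row_space_interpolation rV.
have [tau [tau2 obstruction]] := signed_minors_sign_obstruction R sg gi.
have [a za] := interp tau.
have Tz : closure Tbase (a *m U) by apply: UT; exact: submxMl.
have near_z : \forall y \near a *m U, forall k, 0 < (y *m invmx E) 0 (g k) * tau k.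
  have near_k k : \forall y \near a *m U, 0 < (y *m invmx E) 0 (g k) * tau k.
    have := @cvgMr_tmp R _ (nbhs (a *m U)) _ _ _ (tau k)
      (@mulmx_coord_continuous R _ _ (invmx E) (g k) (a *m U)).
    rewrite /= -mulmxA za tau2 => /(_ _) cvg1.
    apply: (cvg1 [set r | 0 < r]); apply: open_nbhs_nbhs; split => //.
    exact: ltr01.
  exact: filter_forall near_k.
have [x [[xs [Pxs Kx]] pos]] := Tz _ near_z.
have [k] := obstruction _ (int_pm_signed_minors E_unit KK_basic Kx).
by rewrite mul_col_mx_row0 leNgt pos.
Qed.

End Tbase.

Theorem theorem6 (R : realType) (n : nat) (K1 : set 'rV[R]_n)
  (K : forall j : nat, set (ext R n j)) :
  proper_cone K1 ->
  (forall j, (2 <= j <= n)%N -> proper_cone (K j)) ->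
  (forall j, (2 <= j <= n)%N ->
     exists (E : 'M[R]_n) (sg : jset n j -> bool),
       E \in unitmx /\ K j `<=` ext_basic_cone E sg) ->
  forall j, (2 <= j <= n)%N ->
    Tcone K1 K j !=set0 -> cone_of_rank (Tcone K1 K j) j.
Proof.
move=> _ K_proper K_basic [|[|m]] // /[dup] mn /andP [_ m2n].
have [E [sg [E_unit KE]]] := K_basic m.+2 mn.
have [_ _ K_cone _ _] := K_proper m.+2 mn.
set P := fun xs : 'I_m.+1 -> 'rV[R]_n => forall i : 'I_m.+1, Tupto K1 K m i.+1 (xs i).
have -> : Tcone K1 K m.+2 = closure (Tbase P (K m.+2)) by rewrite /Tcone /= ltnn.
move=> /set0P Tne; have /set0P [x0 Tx0] : Tbase P (K m.+2) != set0.
  by apply: contraNneq Tne => ->; rewrite closure0.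
split.
- exact: closed_closure.
- by move=> x a; apply: (closure_TbaseZ (P := P) K_cone); exists x0.
- exact: (closure_Tbase_subspace (P := P) K_cone E_unit KE m2n Tx0).
- exact: (rank_subspace_closure_Tbase (P := P) E_unit KE).
Qed.
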